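(* Let $n\ge 3$ be odd. Then $K^*_n$ has a rotationally symmetric (r.s.) nomadic near-Hamiltonian decomposition: there is a partition of the arc set of $K^*_n$ (with vertex set $\mathbb{Z}_n$) into $n$ directed cycles $C_1,\dots,C_n$, each of length $n-1$, together with a choice of root vertex $v_i$ on each $C_i$, such that, writing $g_i(t)=v_i^{+t}$ for the position of the nomad on $C_i$ at time $t$, for every pair $i\neq j$ there is a constant $c_{ij}\not\equiv 0 \pmod n$ with $g_i(t)-g_j(t)\equiv c_{ij}\pmod n$ for all integers $t\ge 0$. In particular $v_i^{+t}\neq v_j^{+t}$ for all $i\ne j$ and all $t\ge 0$. *)

From HB Require Import structures.
From mathcomp Require Import all_boot all_order all_algebra.
Set Implicit Arguments. Unset Strict Implicit. Unset Printing Implicit Defensive.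
Import GRing.Theory.
Local Open Scope ring_scope.

(* A directed cycle of the digraph on vertex set 'Z_n is represented by the
   sequence of its vertices [:: v; v^{+1}; ...; v^{+(L-1)}] listed in the
   direction of the cycle, starting at its chosen root v (the head).  *)

Definition cyc_arc (n : nat) (c : seq 'Z_n) (k : nat) : 'Z_n * 'Z_n :=
  (nth 0 c k, nth 0 c ((k.+1) %% size c)%N).

Definition nomad (n : nat) (c : seq 'Z_n) (t : nat) : 'Z_n :=
  nth 0 c (t %% size c)%N.

Definition is_dcycle (n : nat) (L : nat) (c : seq 'Z_n) : Prop :=
  size c = L /\ (1 < L)%N /\ uniq c.

Definition arc_partition (n : nat) (C : 'I_n -> seq 'Z_n) : Prop :=
  forall u v : 'Z_n, u != v ->
    exists! p : 'I_n * nat,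
      (p.2 < size (C p.1))%N /\ cyc_arc (C p.1) p.2 = (u, v).

Definition rot_symmetric (n : nat) (C : 'I_n -> seq 'Z_n) : Prop :=
  forall i : 'I_n, exists j : 'I_n, exists r : nat,
    C j = rot r [seq x + 1 | x <- C i].

Definition nomadic (n : nat) (C : 'I_n -> seq 'Z_n) : Prop :=
  forall i j : 'I_n, i != j ->
    exists c : 'Z_n, c != 0 /\
      forall t : nat, nomad (C i) t - nomad (C j) t = c.

(* Take one cycle c of length n - 1 in Z_n whose n - 1 cyclic differences are
   exactly the nonzero residues, and let C_i = c + i.  Every arc (u, v) has
   difference v - u, which occurs at exactly one position k of c, and then
   (u, v) lies on C_i exactly for i = u - c_k: the translates partition the
   arcs.  Translating by 1 permutes the family, and the nomads of C_i and C_j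
   stay at constant distance i - j.  For n = 2m + 1 such a cycle is a zigzag
   0, 1, -1, 2, -2, ... around 0 with one vertex skipped. *)
From HB Require Import structures.
From mathcomp Require Import all_boot all_order all_algebra.
From mathcomp Require Import zify ring.
Set Implicit Arguments. Unset Strict Implicit. Unset Printing Implicit Defensive.
Import GRing.Theory.
Local Open Scope ring_scope.

Definition translate (n : nat) (c : seq 'Z_n) (i : 'Z_n) : seq 'Z_n :=
  [seq x + i | x <- c].

Definition cyc_diff (n : nat) (c : seq 'Z_n) (k : nat) : 'Z_n :=
  nth 0 c (k.+1 %% size c) - nth 0 c k.

Section Translates.

Variable n : nat.
Implicit Types (c : seq 'Z_n) (i j : 'Z_n).

Lemma size_translate c i : size (translate c i) = size c.
Proof. exact: size_map. Qed.

Lemma nth_translate c i k : (k < size c)%N ->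
  nth 0 (translate c i) k = nth 0 c k + i.
Proof. exact: nth_map. Qed.

Lemma translateD c i j : translate (translate c i) j = translate c (i + j).
Proof. by rewrite /translate -map_comp; apply: eq_map => x /=; rewrite addrA. Qed.

Lemma size_dcycle L c : is_dcycle L c -> size c = L.
Proof. by case. Qed.

Lemma translate_dcycle L c i : is_dcycle L c -> is_dcycle L (translate c i).
Proof.
case=> size_c [L_gt1 uniq_c]; split; first by rewrite size_translate.
by split; last by rewrite map_inj_uniq // => x y /addIr.
Qed.

Lemma cyc_arc_translate c i k : (k < size c)%N ->
  cyc_arc (translate c i) k = (nth 0 c k + i, nth 0 c (k.+1 %% size c) + i).
Proof.
move=> lt_k; have lt_k1 : (k.+1 %% size c < size c)%N by rewrite ltn_pmod //; lia.
by rewrite /cyc_arc size_translate !nth_translate.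
Qed.

Lemma nomad_translate c i t : (0 < size c)%N ->
  nomad (translate c i) t = nomad c t + i.
Proof. by move=> c_gt0; rewrite /nomad size_translate nth_translate ?ltn_pmod. Qed.

Lemma cyc_diff_neq0 c k : uniq c -> (1 < size c)%N -> (k < size c)%N ->
  cyc_diff c k != 0.
Proof.
move=> uniq_c c_gt1 lt_k; rewrite subr_eq0 nth_uniq ?ltn_pmod //; last by lia.
have [lt_k1 | ge_k1] := ltnP k.+1 (size c); first by rewrite modn_small ?gtn_eqF.
have -> : k.+1 = size c by lia.
by rewrite modnn; lia.
Qed.

End Translates.

(* Working modulo [n.+2] makes ['Z_n.+2] and ['I_n.+2] convertible, so that
   the indices of the family can be used as translation amounts. *)
Section TranslateDecomposition.

Variable n : nat.
Local Notation N := n.+2.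
Variable c : seq 'Z_N.
Hypothesis c_dcycle : is_dcycle N.-1 c.
Hypothesis cyc_diff_inj : {in gtn (size c) &, injective (cyc_diff c)}.

Lemma cyc_diff_onto w : w != 0 -> exists2 k, (k < size c)%N & cyc_diff c k = w.
Proof.
move=> w_neq0; case: c_dcycle => _ [c_gt1 uniq_c].
pose d (k : 'I_(size c)) := cyc_diff c k.
have d_inj : injective d.
  by move=> k1 k2 /cyc_diff_inj eq_k; apply/val_inj/eq_k; rewrite inE ltn_ord.
have im_d : d @: setT = [set~ 0].
  apply/eqP; rewrite eqEcard cardsC1 card_imset // cardsT !card_ord.
  have -> : (Zp_trunc N).+2.-1 = size c by rewrite (size_dcycle c_dcycle).
  rewrite leqnn andbT; apply/subsetP => _ /imsetP[k _ ->].
  by rewrite !inE /d cyc_diff_neq0 ?(size_dcycle c_dcycle).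
have : w \in d @: setT by rewrite im_d !inE.
by case/imsetP => k _ ->; exists k.
Qed.

Lemma translates_arc_partition : arc_partition (fun i : 'I_N => translate c i).
Proof.
case: c_dcycle => _ [c_gt1 uniq_c] u v neq_uv.
have [k lt_k diff_k] : exists2 k, (k < size c)%N & cyc_diff c k = v - u.
  by apply: cyc_diff_onto; rewrite subr_eq0 eq_sym.
exists (u - nth 0 c k, k); split.
  split; rewrite /= ?size_translate // cyc_arc_translate //.
  have -> : v = cyc_diff c k + u by rewrite diff_k subrK.
  by congr pair; rewrite /cyc_diff; ring.
case=> [i k'] [/=]; rewrite size_translate => lt_k' /=.
rewrite cyc_arc_translate // => -[arc_u arc_v].
have eq_k : k' = k.
  by apply: cyc_diff_inj; rewrite ?inE // diff_k -arc_u -arc_v /cyc_diff; ring.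
by rewrite eq_k in arc_u *; congr pair; rewrite -arc_u; ring.
Qed.

Lemma translates_rot_symmetric : rot_symmetric (fun i : 'I_N => translate c i).
Proof. by move=> i; exists (i + 1 : 'Z_N), 0%N; rewrite rot0 -translateD. Qed.

Lemma translates_nomadic : nomadic (fun i : 'I_N => translate c i).
Proof.
move=> i j neq_ij; exists (i - j : 'Z_N); rewrite subr_eq0; split => // t.
by rewrite !nomad_translate ?(size_dcycle c_dcycle) // opprD addrACA subrr add0r.
Qed.

End TranslateDecomposition.

(* [zigzag m k] is the k-th vertex of the cycle 0, 1, -1, 2, -2, ..., m-1,
   -(m-1), m in Z_(2m+1), except that the positive vertices above m/2 are
   raised by one; [zigzag_step m k] is the representative in (0, 2m+1) of
   the difference between the k-th and the next vertex. *)
Definition zigzag (m k : nat) : nat :=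
  if odd k then (if (k.+1)./2 <= m./2 then (k.+1)./2 else ((k.+1)./2).+1)%N
  else (if k./2 == 0 then 0 else m.*2.+1 - k./2)%N.

Definition zigzag_step (m k : nat) : nat :=
  if odd k then
    (if (k.+1)./2 == m then m
     else if (k.+1)./2 <= m./2 then m.*2.+1 - ((k.+1)./2).*2
     else m.*2 - ((k.+1)./2).*2)%N
  else (if (k./2).+1 <= m./2 then ((k./2).+1).*2 - 1 else ((k./2).+1).*2)%N.

Section Zigzag.

Variable m : nat.
Hypothesis m_gt0 : (0 < m)%N.

Lemma zigzag_lt k : (k < m.*2)%N -> (zigzag m k < m.*2.+1)%N.
Proof. by move=> lt_k; rewrite /zigzag; repeat case: ifP => ?; lia. Qed.

Lemma zigzag_inj : {in gtn m.*2 &, injective (zigzag m)}.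
Proof. by move=> k1 k2; rewrite !inE /zigzag; repeat case: ifP => ?; lia. Qed.

Lemma zigzag_step_gt0 k : (k < m.*2)%N -> (0 < zigzag_step m k < m.*2.+1)%N.
Proof. by move=> lt_k; rewrite /zigzag_step; repeat case: ifP => ?; lia. Qed.

Lemma zigzag_step_inj : {in gtn m.*2 &, injective (zigzag_step m)}.
Proof.
by move=> k1 k2; rewrite !inE /zigzag_step; repeat case: ifP => ?; lia.
Qed.

Lemma zigzagS k : (k < m.*2)%N ->
  (zigzag m k + zigzag_step m k = zigzag m (k.+1 %% m.*2) %[mod m.*2.+1])%N.
Proof.
move=> lt_k.
suff [-> | ->] : (zigzag m k + zigzag_step m k = zigzag m (k.+1 %% m.*2) \/
    zigzag m k + zigzag_step m k = zigzag m (k.+1 %% m.*2) + m.*2.+1)%N.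
- by [].
- by rewrite modnDr.
have [lt_k1 | ge_k1] := ltnP k.+1 m.*2.
  by rewrite (modn_small lt_k1) /zigzag /zigzag_step; repeat case: ifP => ?; lia.
have -> : k.+1 = m.*2 by lia.
have -> : zigzag m (m.*2 %% m.*2) = 0%N by rewrite modnn.
right; have -> : k = (m.*2 - 1)%N by lia.
by rewrite /zigzag /zigzag_step; repeat case: ifP => ?; lia.
Qed.

Local Notation N := m.*2.+1.

Let N_gt1 : (1 < N)%N. Proof. lia. Qed.

Definition zigzag_cycle : seq 'Z_N := mkseq (fun k => (zigzag m k)%:R) m.*2.

Lemma size_zigzag_cycle : size zigzag_cycle = m.*2.
Proof. exact: size_mkseq. Qed.

Lemma zigzag_cycle_dcycle : is_dcycle N.-1 zigzag_cycle.
Proof.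
split; first exact: size_zigzag_cycle.
split; first lia.
rewrite map_inj_in_uniq ?iota_uniq // => k1 k2; rewrite !mem_iota !add0n => lt1 lt2.
move/(congr1 (@nat_of_ord _)); rewrite !val_Zp_nat ?N_gt1 // !modn_small ?zigzag_lt //.
by apply: zigzag_inj.
Qed.

Lemma cyc_diff_zigzag_cycle k : (k < m.*2)%N ->
  cyc_diff zigzag_cycle k = (zigzag_step m k)%:R.
Proof.
move=> lt_k; have lt_k1 : (k.+1 %% m.*2 < m.*2)%N by rewrite ltn_pmod; lia.
rewrite /cyc_diff size_zigzag_cycle !nth_mkseq //.
rewrite -(Zp_nat_mod N_gt1 (zigzag m _)) -(zigzagS lt_k) Zp_nat_mod ?N_gt1 //.
by rewrite natrD addrC addKr.
Qed.

Lemma cyc_diff_zigzag_cycle_inj :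
  {in gtn (size zigzag_cycle) &, injective (cyc_diff zigzag_cycle)}.
Proof.
move=> k1 k2; rewrite !inE size_zigzag_cycle => lt1 lt2.
rewrite !cyc_diff_zigzag_cycle // => /(congr1 (@nat_of_ord _)).
rewrite !val_Zp_nat ?N_gt1 // !modn_small; last 2 first.
- by case/andP: (zigzag_step_gt0 lt2).
- by case/andP: (zigzag_step_gt0 lt1).
by apply: zigzag_step_inj.
Qed.

End Zigzag.

Theorem theorem1 (n : nat) (Hn : (3 <= n)%N) (Hodd : odd n) :
  exists C : 'I_n -> seq 'Z_n,
    (forall i, is_dcycle n.-1 (C i)) /\
    arc_partition C /\
    rot_symmetric C /\
    nomadic C.
Proof.
have [m ->] : exists m, n = (m.+1).*2.+1 by exists (n./2).-1; lia.
have c_dcycle := @zigzag_cycle_dcycle m.+1 isT.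
have diff_inj := @cyc_diff_zigzag_cycle_inj m.+1 isT.
exists (fun i : 'I_(m.*2.+1).+2 => translate (zigzag_cycle m.+1) i).
split; first by move=> i; exact: translate_dcycle.
split; first exact: (@translates_arc_partition (m.*2.+1)).
split; first exact: (@translates_rot_symmetric (m.*2.+1)).
exact: (@translates_nomadic (m.*2.+1)).
Qed.
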